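(* Let $n\ge 1$ and let $\tau\in \mathrm{RT}(n)$. In dimension $d=1$ one has $F(\tau)=G(\pi(\tau))$, i.e. for all $f_1,\dots,f_n\in C^\infty(\mathbb{R},\mathbb{R})$, $$F(\tau)(f_1,\dots,f_n)=f_1^{(\varphi_\tau(1))}\cdots f_n^{(\varphi_\tau(n))},$$ where $\varphi_\tau(v)$ is the number of children of the vertex $v$ in $\tau$.
   Context: A rooted tree on a finite vertex set $V\subset\mathbb{N}$ is a set $E$ of ordered pairs of elements of $V$ (an edge $(v,w)$ means $w$ is a child of $v$) such that exactly one vertex $r$ (the root) has no parent, every other vertex $w$ has exactly one parent (exactly one $v$ with $(v,w)\in E$), and every vertex is connected to the root by following parents. $C_v=\{w:(v,w)\in E\}$ is the set of children of $v$; for $v\in V$, $\tau_v$ is the subtree consisting of $v$ and all vertices above it (descendants), with the induced edges. $\mathrm{RT}(n)$ is the set of rooted trees with vertex set $[n]=\{1,\dots,n\}$. Elementary differentials: let $\mathcal{C}_d=C^\infty(\mathbb{R}^d,\mathbb{R}^d)$, $g_j$ the $j$-th coordinate of $g$, $\partial_j=\partial/\partial x_j$. For a rooted tree $\tau$ on $V$ with root $r$ whose children are $v_1,\dots,v_k$, and for $f^i\in\mathcal{C}_d$ ($i\in V$), define recursively $$F(\tau)((f^i)_{i\in V})=\sum_{j_1,\dots,j_k=1}^d F(\tau_{v_1})((f^i)_{i\in V(\tau_{v_1})})_{j_1}\cdots F(\tau_{v_k})((f^i)_{i\in V(\tau_{v_k})})_{j_k}\,\partial_{j_1}\cdots\partial_{j_k}f^r$$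 (for a single vertex, $F(\tau)=f^r$). For $d=1$ this is an $n$-linear map $C^\infty(\mathbb{R},\mathbb{R})^n\to C^\infty(\mathbb{R},\mathbb{R})$. A multi-index on $[n]$ is a map $\varphi:[n]\to\mathbb{N}$ with $\sum_{v}\varphi(v)=n-1$; $\mathrm{MI}(n)$ is the set of these. The map $\pi:\mathrm{RT}(n)\to\mathrm{MI}(n)$ sends $\tau$ to $\varphi_\tau$, $\varphi_\tau(v)=|C_v|$. For $\varphi\in\mathrm{MI}(n)$, $G(\varphi)(f_1,\dots,f_n)=f_1^{(\varphi(1))}\cdots f_n^{(\varphi(n))}$, where $f^{(k)}$ is the $k$-th derivative. *)

From Stdlib Require Import Reals.
From Coquelicot Require Import Coquelicot.
From mathcomp Require Import all_boot.

Set Implicit Arguments.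
Unset Strict Implicit.
Unset Printing Implicit Defensive.

(* Vertex set [n] = {1,...,n} is represented by 'I_n = {0,...,n-1}
   (vertex i : 'I_n stands for the paper's vertex i+1).
   A set of edges E : {set 'I_n * 'I_n}; (v,w) \in E means w is a child of v. *)

Definition parents n (E : {set 'I_n * 'I_n}) (w : 'I_n) : {set 'I_n} :=
  [set v | (v, w) \in E].

Definition children n (E : {set 'I_n * 'I_n}) (v : 'I_n) : {set 'I_n} :=
  [set w | (v, w) \in E].

Definition parent_rel n (E : {set 'I_n * 'I_n}) : rel 'I_n :=
  fun a b => (b, a) \in E.

Definition is_root n (E : {set 'I_n * 'I_n}) (r : 'I_n) : Prop :=
  #|parents E r| = 0%N.

Definition rooted_tree n (E : {set 'I_n * 'I_n}) : Prop :=
  (exists r, is_root E r /\ forall r', is_root E r' -> r' = r) /\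
  (forall w, ~ is_root E w -> #|parents E w| = 1%N) /\
  (forall w r, is_root E r -> connect (parent_rel E) w r).

Definition root_of n (E : {set 'I_n * 'I_n}) : option 'I_n :=
  [pick r | #|parents E r| == 0%N].

(* Elementary differential in dimension d = 1.  For d = 1 the sums over
   j_1..j_k in the recursive definition have a single term and
   d_{j_1}...d_{j_k} f^r is the k-th derivative of f^r, so
     F(tau_v)(f)(x) = (prod_{w in C_v} F(tau_w)(f)(x)) * (f^v)^{(|C_v|)}(x).
   The recursion on subtrees is implemented with a fuel argument; the depth
   of a tree on n vertices is < n, so fuel n suffices. *)
Fixpoint F_sub (fuel : nat) n (E : {set 'I_n * 'I_n}) (f : 'I_n -> R -> R)
  (v : 'I_n) (x : R) : R :=
  match fuel with
  | O => R0
  | S k => Rmult (\big[Rmult/R1]_(w in children E v) F_sub k E f w x)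
                 (Derive_n (f v) #|children E v| x)
  end.

Definition F_tree n (E : {set 'I_n * 'I_n}) (f : 'I_n -> R -> R) : R -> R :=
  match root_of E with
  | Some r => F_sub n E f r
  | None => fun _ => R0
  end.

Definition multi_index n (phi : 'I_n -> nat) : Prop :=
  (\sum_(v < n) phi v)%N = n.-1.

Definition pi_tree n (E : {set 'I_n * 'I_n}) : 'I_n -> nat :=
  fun v => #|children E v|.

Definition G_mi n (phi : 'I_n -> nat) (f : 'I_n -> R -> R) : R -> R :=
  fun x => \big[Rmult/R1]_(i < n) Derive_n (f i) (phi i) x.

Definition smooth (g : R -> R) : Prop :=
  forall k x, ex_derive_n g k x.

(* In dimension one every vertex v contributes the single factor
   f_v^(|C_v|), and F(tau_v) is this factor times the product of the
   F(tau_c) over the children c of v.  Since the subtrees tau_c partition the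
   descendants of v other than v, induction on subtrees shows that F(tau_v) is
   the product of f_w^(|C_w|) over all descendants w of v; for the root these
   are all vertices.  The fuel of [F_sub] is harmless: it only has to bound
   the size of the subtree, which strictly decreases from a vertex to its
   children. *)

From Stdlib Require Import Reals FunctionalExtensionality.
From Coquelicot Require Import Coquelicot.
From HB Require Import structures.
From mathcomp Require Import all_boot.

Set Implicit Arguments.
Unset Strict Implicit.
Unset Printing Implicit Defensive.

HB.instance Definition _ :=
  Monoid.isComLaw.Build R R1 Rmult (fun a b c => esym (Rmult_assoc a b c))
    Rmult_comm Rmult_1_l.

Lemma fconnect_total (T : finType) (f : T -> T) x y z :
  fconnect f x y -> fconnect f x z -> fconnect f y z || fconnect f z y.
Proof.
move=> /iter_findex <- /iter_findex <-.
move: (findex f x y) (findex f x z) => i j.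
have [le_ij | /ltnW le_ji] := leqP i j.
- by rewrite -(subnK le_ij) iterD fconnect_iter.
- by rewrite -(subnK le_ji) iterD fconnect_iter orbT.
Qed.

Section ParentFunction.

Variables (T : finType) (par : T -> T) (r : T).
Hypothesis par_root : par r = r.
Hypothesis reach_root : forall w, fconnect par w r.

Definition fdesc v : {set T} := [set w | fconnect par w v].

Definition fchildren v : {set T} := [set c | (c != r) && (par c == v)].

Lemma periodic_eq_root c k : iter k.+1 par c = c -> c = r.
Proof.
set p := k.+1 => cycle_c.
have cycleM m : iter (m * p) par c = c.
  by elim: m => // m IHm; rewrite mulSn iterD IHm cycle_c.
have /iter_findex := reach_root c; move: (findex par c r) => j reach_j.
by rewrite -(cycleM j) -(subnK (leq_pmulr j (ltn0Sn k))) iterD reach_j iter_fix.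
Qed.

Lemma fdesc_self v : v \in fdesc v.
Proof. by rewrite inE connect0. Qed.

Lemma fdesc_child_sub v c : c \in fchildren v -> fdesc c \subset fdesc v.
Proof.
rewrite inE => /andP[_ /eqP <-]; apply/subsetP => w; rewrite !inE => w_c.
exact: connect_trans w_c (fconnect1 par c).
Qed.

Lemma fdesc_child_notin v c : c \in fchildren v -> v \notin fdesc c.
Proof.
rewrite !inE => /andP[c_r /eqP <-]; apply: contra c_r => /iter_findex.
by rewrite -iterSr => /periodic_eq_root ->.
Qed.

Lemma fdesc_proper v c : c \in fchildren v -> fdesc c \proper fdesc v.
Proof.
move=> cv; apply/properP; split; first exact: fdesc_child_sub.
by exists v; [exact: fdesc_self | exact: fdesc_child_notin].
Qed.

Lemma fchildren_fconnect_eq v c1 c2 :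
  c1 \in fchildren v -> c2 \in fchildren v -> fconnect par c1 c2 -> c1 = c2.
Proof.
rewrite !inE => /andP[_ /eqP par_c1] /andP[c2_r /eqP par_c2] /iter_findex.
case: (findex par c1 c2) => [// | k].
rewrite iterSr par_c1 -par_c2 -iterSr => /periodic_eq_root c2_eq_r.
by rewrite c2_eq_r eqxx in c2_r.
Qed.

Lemma fdesc_disjoint v c1 c2 : c1 \in fchildren v -> c2 \in fchildren v ->
  c1 != c2 -> [disjoint fdesc c1 & fdesc c2].
Proof.
move=> c1v c2v; apply: contraNT; rewrite -setI_eq0 => /set0Pn[w].
rewrite !inE => /andP[w_c1 w_c2].
have /orP[] := fconnect_total w_c1 w_c2.
- by move=> /(fchildren_fconnect_eq c1v c2v) ->.
- by move=> /(fchildren_fconnect_eq c2v c1v) ->.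
Qed.

Lemma fdesc_cover v : fdesc v = v |: \bigcup_(c in fchildren v) fdesc c.
Proof.
apply/setP => w; apply/idP/setU1P => [|[-> | /bigcupP[c cv]]]; last first.
- exact/subsetP/fdesc_child_sub.
- exact: fdesc_self.
rewrite inE => /iter_findex; move: (findex par w v) => k.
elim: k w => [|k IHk] w; first by left.
rewrite iterSr => /IHk[par_w | /bigcupP[c cv]].
  have [w_eq_r | w_r] := eqVneq w r.
    by left; rewrite -par_w w_eq_r par_root.
  right; apply/bigcupP; exists w; last exact: fdesc_self.
  by rewrite inE w_r par_w eqxx.
rewrite inE => pw_c; right; apply/bigcupP; exists c => //.
by rewrite inE (connect_trans (fconnect1 par w) pw_c).
Qed.

Lemma big_fdesc (R : Type) (idx : R) (op : Monoid.com_law idx) (g : T -> R) v :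
  \big[op/idx]_(w in fdesc v) g w =
  op (g v) (\big[op/idx]_(c in fchildren v) \big[op/idx]_(w in fdesc c) g w).
Proof.
pose D c := if c \in fchildren v then fdesc c else set0.
have disjD c1 c2 : c1 != c2 -> [disjoint D c1 & D c2].
  rewrite /D -setI_eq0; case: ifP => [c1v | _]; last by rewrite set0I.
  case: ifP => [c2v neq_c | _]; last by rewrite setI0.
  by rewrite setI_eq0 (fdesc_disjoint c1v c2v neq_c).
rewrite fdesc_cover big_setU1 /=; last first.
  by apply/bigcupP => -[c /fdesc_child_notin/negP].
have -> : \bigcup_(c in fchildren v) fdesc c = \bigcup_c D c.
  by rewrite big_mkcond.
rewrite partition_disjoint_bigcup //; congr (op _).
rewrite [RHS]big_mkcond; apply: eq_bigr => c _; rewrite /D.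
by case: ifP => // _; rewrite big_set0.
Qed.

Lemma fdesc_root : fdesc r = setT.
Proof. by apply/setP => w; rewrite !inE reach_root. Qed.

End ParentFunction.

(* A vertex without parent, i.e. the root, is its own parent. *)
Definition tree_parent n (E : {set 'I_n * 'I_n}) (w : 'I_n) : 'I_n :=
  odflt w [pick v | (v, w) \in E].

Lemma root_ofE n (E : {set 'I_n * 'I_n}) r :
  is_root E r -> (forall r', is_root E r' -> r' = r) -> root_of E = Some r.
Proof.
rewrite /root_of => root_r root_unique.
case: pickP => [r' /eqP /root_unique -> // | none].
by have := none r; rewrite root_r eqxx.
Qed.

Section RootedTree.

Variables (n : nat) (E : {set 'I_n * 'I_n}) (r : 'I_n).
Hypothesis root_r : parents E r = set0.
Hypothesis one_parent : forall w, w != r -> #|parents E w| = 1%N.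
Hypothesis reach : forall w, connect (parent_rel E) w r.

Local Notation par := (tree_parent E).

Lemma edge_child_neq_root v c : (v, c) \in E -> c != r.
Proof.
by apply: contraTneq => ->; have := in_set0 v; rewrite -root_r inE => ->.
Qed.

Lemma tree_parent_root : par r = r.
Proof.
rewrite /tree_parent; case: pickP => [v | //].
by have := in_set0 v; rewrite -root_r inE => ->.
Qed.

Lemma tree_parent_edge c : c != r -> (par c, c) \in E.
Proof.
move=> /one_parent /eqP /cards1P[u par_c]; rewrite /tree_parent.
case: pickP => [// | none].
by have := set11 u; rewrite -par_c inE none.
Qed.

Lemma tree_parentE v c : (v, c) \in E -> par c = v.
Proof.
move=> vc; have c_r := edge_child_neq_root vc.
have /one_parent /eqP /cards1P[u par_c] := c_r.
have : v \in parents E c by rewrite inE.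
have : par c \in parents E c by rewrite inE tree_parent_edge.
by rewrite par_c !inE => /eqP -> /eqP ->.
Qed.

Lemma children_tree_parent v : children E v = fchildren par r v.
Proof.
apply/setP => c; rewrite !inE; apply/idP/andP => [vc | [c_r /eqP <-]].
  by rewrite (edge_child_neq_root vc) (tree_parentE vc).
exact: tree_parent_edge.
Qed.

Lemma tree_parent_reach w : fconnect par w r.
Proof.
apply: connect_sub (reach w) => a b /tree_parentE par_a.
by apply: connect1; rewrite /= par_a.
Qed.

Lemma F_sub_fdesc f x k v : (#|fdesc par v| <= k)%N ->
  F_sub k E f v x =
  \big[Rmult/R1]_(w in fdesc par v) Derive_n (f w) #|children E w| x.
Proof.
elim: k v => [|k IHk] v le_k.
  move: le_k; rewrite leqn0 => /eqP/cards0_eq/setP/(_ v).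
  by rewrite fdesc_self inE.
rewrite /= (big_fdesc tree_parent_root tree_parent_reach) [LHS]Rmult_comm.
congr Rmult; apply: eq_big => [c | c]; first by rewrite children_tree_parent.
rewrite children_tree_parent => cv; apply: IHk; rewrite -ltnS.
have := fdesc_proper tree_parent_root tree_parent_reach cv.
by move=> /proper_card/leq_trans; apply.
Qed.

Lemma F_sub_root f : F_sub n E f r = G_mi (pi_tree E) f.
Proof.
have fdesc_rT := fdesc_root tree_parent_reach.
apply: functional_extensionality => x.
rewrite F_sub_fdesc; last by rewrite fdesc_rT cardsT card_ord.
by rewrite fdesc_rT; apply: eq_bigl => w; rewrite inE.
Qed.

End RootedTree.

Theorem proposition2p6 (n : nat) (E : {set 'I_n * 'I_n}) :
  (1 <= n)%N -> rooted_tree E ->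
  forall f : 'I_n -> R -> R, (forall i, smooth (f i)) ->
  F_tree E f = G_mi (pi_tree E) f.
Proof.
move=> _ [[r [root_r root_unique]] [one_parent reach]] f _.
rewrite /F_tree (root_ofE root_r root_unique).
apply: F_sub_root => [| w w_r | w]; last exact: reach.
- exact: cards0_eq.
- by apply: one_parent => /root_unique w_eq_r; rewrite w_eq_r eqxx in w_r.
Qed.
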